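(* Let $L'$ and $L$ be layers in a layered sequent $G$, and let $S$ be a layer simulation between $L'$ and $L$. Then for every $x\in L$ there is $x'\in L'$ with $x' \mathrel{S} x$.
   Context: A sequent $G$ is $\mathcal{R},\Gamma\Rightarrow\Delta$ with $\mathcal{R}$ a set of relational atoms $xRy$, $x\le y$ between labels and $\Gamma,\Delta$ multisets of labelled formulas $x{:}A$; $xR_Gy$, $x\le_G y$ mean the atom is in $\mathcal{R}$. A layer is an equivalence class of the reflexive-transitive closure of $R_G\cup R_G^{-1}$. $G$ is layered if for all labels $x,x',y,y'$: (1) if $x,y$ lie in the same layer and $x\ne y$ then neither $x\le_G y$ nor $y\le_G x$; (2) if $x,y$ lie in the same layer, $x',y'$ lie in the same layer, $x\le_G x'$ and $x\ne x'$, then not $y'\le_G y$. Labels $x,y$ are equivalent, $x\sim y$, iff exactly the same formulas occur at $x$ and at $y$ in $\Gamma$, and exactly the same formulas occur at $x$ and at $y$ in $\Delta$. A layer simulation between $L'$ and $L$ is a non-empty relation $S\subseteq (L'\times L)\cap\sim$ such that for all $x'\in L'$, $x,y\in L$: (S1) if $x'Sx$ and $xR_Gy$ then there is $y'\in L'$ with $x'R_Gy'$ and $y'Sy$; (S2) if $x'Sx$ and $yR_Gx$ then there is $y'\in L'$ with $y'R_Gx'$ and $y'Sy$. *)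

From Stdlib Require Import List Relations.
Import ListNotations.
Set Implicit Arguments.

Definition label := nat.

Inductive ratom : Type :=
| RelA : label -> label -> ratom
| LeA  : label -> label -> ratom.

(* A sequent  R, Gamma => Delta ; multisets represented as lists. *)
Record sequent (F : Type) : Type := Sequent {
  rels : list ratom;
  ante : list (label * F);
  succ : list (label * F)
}.

Section Defs.
Variable F : Type.
Variable G : sequent F.

Definition RG (x y : label) : Prop := In (RelA x y) (rels G).
Definition LeG (x y : label) : Prop := In (LeA x y) (rels G).

Definition label_of (x : label) : Prop :=
  (exists y, In (RelA x y) (rels G) \/ In (RelA y x) (rels G)
          \/ In (LeA x y) (rels G) \/ In (LeA y x) (rels G))
  \/ (exists A, In (x, A) (ante G) \/ In (x, A) (succ G)).

Definition same_layer : relation label :=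
  clos_refl_trans label (fun x y => RG x y \/ RG y x).

Definition is_layer (L : label -> Prop) : Prop :=
  exists x, label_of x /\ forall y, L y <-> (label_of y /\ same_layer x y).

Definition layered : Prop :=
  (forall x y, same_layer x y -> x <> y -> ~ LeG x y /\ ~ LeG y x) /\
  (forall x y x' y', same_layer x y -> same_layer x' y' ->
     LeG x x' -> x <> x' -> ~ LeG y' y).

Definition lequiv (x y : label) : Prop :=
  (forall A, In (x, A) (ante G) <-> In (y, A) (ante G)) /\
  (forall A, In (x, A) (succ G) <-> In (y, A) (succ G)).

Definition layer_sim (L' L : label -> Prop) (S : label -> label -> Prop) : Prop :=
  (exists x' x, S x' x) /\
  (forall x' x, S x' x -> L' x' /\ L x /\ lequiv x' x) /\
  (forall x' x y, L' x' -> L x -> L y -> S x' x -> RG x y ->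
     exists y', L' y' /\ RG x' y' /\ S y' y) /\
  (forall x' x y, L' x' -> L x -> L y -> S x' x -> RG y x ->
     exists y', L' y' /\ RG y' x' /\ S y' y).
End Defs.

(* A layer is connected under R_G and its converse, and conditions (S1) and (S2)
   say that the range of S inside L is closed under R_G-steps in either direction.
   Since S is non-empty, following a path from a point of its range reaches every
   label of L. *)
From Stdlib Require Import List Relations.

Lemma clos_rt_invariant {A : Type} {R : relation A} (P : A -> Prop) :
  (forall x y, R x y -> P x -> P y) ->
  forall x y, clos_refl_trans A R x y -> P x -> P y.
Proof. intros HR x y Hxy; induction Hxy; eauto. Qed.

Section Layers.
Context {F : Type} {G : sequent F}.

Lemma same_layer_sym {x y : label} : same_layer G x y -> same_layer G y x.
Proof.
  intros Hxy; induction Hxy.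
  - apply rt_step; tauto.
  - apply rt_refl.
  - eapply rt_trans; eauto.
Qed.

Lemma layer_connected {L : label -> Prop} {x y : label} :
  is_layer G L -> L x -> L y -> same_layer G x y.
Proof.
  intros [c [_ HL]] Hx Hy.
  apply HL in Hx as [_ Hcx]; apply HL in Hy as [_ Hcy].
  eapply rt_trans; [apply same_layer_sym, Hcx | exact Hcy].
Qed.

Lemma layer_step_closed {L : label -> Prop} {x y : label} :
  is_layer G L -> L x -> RG G x y \/ RG G y x -> L y.
Proof.
  intros [c [_ HL]] Hx Hstep.
  apply HL in Hx as [_ Hcx].
  apply HL; split.
  - left; exists x; unfold RG in Hstep; tauto.
  - eapply rt_trans; [exact Hcx | apply rt_step, Hstep].
Qed.

Lemma layer_sim_range_step {L' L : label -> Prop} {S : label -> label -> Prop}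
    {x y : label} :
  is_layer G L -> layer_sim G L' L S -> RG G x y \/ RG G y x ->
  (exists x', S x' x) -> exists y', S y' y.
Proof.
  intros HL [_ [Hdom [HS1 HS2]]] Hstep [x' Hx'x].
  destruct (Hdom _ _ Hx'x) as [HL'x' [HLx _]].
  pose proof (layer_step_closed HL HLx Hstep) as HLy.
  destruct Hstep as [Hxy | Hyx].
  - destruct (HS1 _ _ _ HL'x' HLx HLy Hx'x Hxy) as [y' [_ [_ Hy'y]]]; eauto.
  - destruct (HS2 _ _ _ HL'x' HLx HLy Hx'x Hyx) as [y' [_ [_ Hy'y]]]; eauto.
Qed.

End Layers.

Theorem mainTheorem6 (F : Type) (G : sequent F)
  (L' L : label -> Prop) (S : label -> label -> Prop) :
  layered G -> is_layer G L' -> is_layer G L -> layer_sim G L' L S ->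
  forall x, L x -> exists x', L' x' /\ S x' x.
Proof.
  intros _ _ HL Hsim x Hx.
  pose proof Hsim as [[x0' [x0 Hx0]] [Hdom _]].
  destruct (Hdom _ _ Hx0) as [_ [HLx0 _]].
  assert (Hrange : exists x', S x' x).
  { apply (clos_rt_invariant (fun y => exists y', S y' y)
             (fun y z => layer_sim_range_step HL Hsim) x0 x).
    - exact (layer_connected HL HLx0 Hx).
    - eauto. }
  destruct Hrange as [x' Hx'x].
  exists x'; split; [apply (Hdom _ _ Hx'x) | exact Hx'x].
Qed.
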